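(* Let $k=3$ and $\alpha=(\tfrac12,\tfrac13,\tfrac15)$. Then every $\alpha$-communal triple is (uniquely) a nonnegative integer combination of $[7,5,3]$, $[5,3,2]$, $[3,2,1]$, and the number $f(g)$ of $\alpha$-communal triples with entries summing to $g$ satisfies \[ \sum_{g\ge0}f(g)x^g=\frac{1}{(1-x^{15})(1-x^{10})(1-x^{6})},\qquad f(g)=\binom{\lfloor g/2\rfloor+\lfloor g/3\rfloor+\lfloor g/5\rfloor-g+2}{2}. \]
   Context: A triple $[g_1,g_2,g_3]$ of integers is $\alpha$-communal if $0\le g_i\le\alpha_i(g_1+g_2+g_3)$ for $i=1,2,3$. Binomial coefficients $\binom{n}{r}$ are $0$ for $0\le n<r$. *)

From HB Require Import structures.
From mathcomp Require Import all_boot all_order all_algebra.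
Set Implicit Arguments. Unset Strict Implicit. Unset Printing Implicit Defensive.
Import Order.TTheory GRing.Theory Num.Theory.

Local Open Scope ring_scope.

Definition itriple := (int * int * int)%type.

Definition communal (a : rat * rat * rat) (g : itriple) : bool :=
  let: ((g1, g2), g3) := g in
  let: ((a1, a2), a3) := a in
  let s : rat := (g1 + g2 + g3)%:~R in
  [&& 0 <= g1, g1%:~R <= a1 * s,
      0 <= g2, g2%:~R <= a2 * s,
      0 <= g3 & g3%:~R <= a3 * s].

Definition alpha : rat * rat * rat := (1 / 2%:R, 1 / 3%:R, 1 / 5%:R).

Definition tsum (g : itriple) : int := g.1.1 + g.1.2 + g.2.

Definition comb (abc : nat * nat * nat) : itriple :=
  let: ((a, b), c) := abc in
  (((7 * a + 5 * b + 3 * c)%N : int),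
   ((5 * a + 3 * b + 2 * c)%N : int),
   ((3 * a + 2 * b + c)%N : int)).

(* f(g) = number of alpha-communal triples with entries summing to g.
   Any such triple has entries in [0, g], so enumerating those suffices. *)
Definition f (g : nat) : nat :=
  count (fun t => communal alpha t && (tsum t == g%:Z))
    [seq ((xy.1%:Z, xy.2%:Z), z%:Z)
       | xy <- [seq (x, y) | x <- iota 0 g.+1, y <- iota 0 g.+1],
         z <- iota 0 g.+1].

Definition gf_trunc (N : nat) : {poly int} := \poly_(i < N.+1) (f i)%:R.

Definition denom : {poly int} := (1 - 'X^15) * (1 - 'X^10) * (1 - 'X^6).

From HB Require Import structures.
From mathcomp Require Import all_boot all_order all_algebra.
From mathcomp Require Import ring zify.
Import Order.TTheory GRing.Theory Num.Theory.

(* 1. Clearing denominators, [x, y, z] is alpha-communal iff x, y, z >= 0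
      and 2x, 3y, 5z <= x + y + z.  The map comb (a, b, c) =
      a[7,5,3] + b[5,3,2] + c[3,2,1] has determinant -1 with inverse
      (y + z - x, x + z - 2y, x + y - 4z), and the three communality
      inequalities say exactly that this inverse image is nonnegative.
   2. For a triple of entry sum g, communality means x <= g/2, y <= g/3,
      z <= g/5, so (g/2 - x, g/3 - y, g/5 - z) is a bijection onto the
      triples of naturals summing to h = g/2 + g/3 + g/5 - g; there are
      'C(h + 2, 2) of them (stars and bars), and none when h < 0.
   3. Multiplication by denom acts on coefficient sequences as a finite
      signed sum of shifts.  Writing L(g) = h + 2 for the binomial
      parameter, L(g + 30) = L(g) + 1, so the closed form satisfies
      F(g + 30) = F(g) + L(g).  Since denom(1) = 0, the shift operator
      kills constants; hence it kills L and then F from index 31 on as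
      soon as it does so on one period, which is checked by computation.
      Together with the values at indices below 31 this gives
      denom * sum_g F(g) x^g = 1. *)

Local Open Scope ring_scope.

Lemma le_unit_fraction (u s : int) (k : nat) : (0 < k)%N ->
  ((u%:~R : rat) <= 1 / k%:R * s%:~R) = (u * k%:Z <= s).
Proof.
move=> k_gt0; rewrite mul1r ler_pdivlMl ?ltr0n //.
by rewrite -[k%:R]/((k%:Z)%:~R : rat) -intrM ler_int mulrC.
Qed.

Lemma communalE (x y z : int) : communal alpha ((x, y), z) =
  [&& 0 <= x, x * 2 <= x + y + z, 0 <= y, y * 3 <= x + y + z,
      0 <= z & z * 5 <= x + y + z].
Proof. by rewrite /communal /alpha !le_unit_fraction. Qed.

Lemma comb_inj : injective comb.
Proof. by case=> [[a b] c] [[a' b'] c'] [e1 e2 e3]; congr (_, _, _); lia. Qed.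

Lemma communal_comb g : communal alpha g -> exists abc, g = comb abc.
Proof.
case: g => [[x y] z]; rewrite communalE => /and5P[x_ge0 hx y_ge0 hy /andP[z_ge0 hz]].
exists ((`|(y + z - x)%R|%N, `|(x + z - y * 2)%R|%N), `|(x + y - z * 4)%R|%N).
by rewrite /comb; congr (_, _, _); lia.
Qed.

Local Close Scope ring_scope.

Lemma count_bij (T U : eqType) (P : pred T) (Q : pred U)
    (s : seq T) (t : seq U) (phi : U -> T) (psi : T -> U) :
  uniq s -> uniq t ->
  (forall u, u \in t -> Q u -> [/\ phi u \in s, P (phi u) & psi (phi u) = u]) ->
  (forall x, x \in s -> P x -> [/\ psi x \in t, Q (psi x) & phi (psi x) = x]) ->
  count P s = count Q t.
Proof.
move=> s_uniq t_uniq phiP psiP.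
rewrite -!size_filter -(size_map phi); apply/perm_size/uniq_perm.
- exact: filter_uniq.
- rewrite map_inj_in_uniq ?filter_uniq // => u v.
  rewrite !mem_filter => /andP[Qu tu] /andP[Qv tv] eq_phi.
  by have [_ _ <-] := phiP u tu Qu; have [_ _ <-] := phiP v tv Qv; rewrite eq_phi.
move=> x; rewrite mem_filter; apply/andP/mapP => [[Px sx] | [u]].
  have [tx Qx phix] := psiP x sx Px.
  by exists (psi x); rewrite ?mem_filter ?Qx.
by rewrite mem_filter => /andP[Qu tu] ->; have [] := phiP u tu Qu.
Qed.

Lemma count_allpairs (S T R : Type) (h : S -> T -> R) (p : pred R) s t :
  count p [seq h x y | x <- s, y <- t] = \sum_(x <- s) count (fun y => p (h x y)) t.
Proof.
rewrite -sum1_count big_mkcond big_allpairs_dep /=.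
by apply: eq_bigr => x _; rewrite -sum1_count [RHS]big_mkcond.
Qed.

Definition pairs (n : nat) : seq (nat * nat) :=
  [seq (x, y) | x <- iota 0 n, y <- iota 0 n].

Definition box (n : nat) : seq (nat * nat * nat) :=
  [seq (xy, z) | xy <- pairs n, z <- iota 0 n].

Definition nsum (t : nat * nat * nat) : nat := t.1.1 + t.1.2 + t.2.

Lemma mem_pairs n p : (p \in pairs n) = (p.1 < n) && (p.2 < n).
Proof.
apply/allpairsP/andP => [[[x y] [/= hx hy ->]] | [h1 h2]].
  by move: hx hy; rewrite !mem_iota.
by exists p; rewrite !mem_iota; case: p h1 h2.
Qed.

Lemma mem_box n t : (t \in box n) = [&& t.1.1 < n, t.1.2 < n & t.2 < n].
Proof.
apply/allpairsP/and3P => [[[xy z] [/= hxy hz ->]] | [h1 h2 h3]].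
  by move: hxy hz; rewrite mem_pairs mem_iota => /andP[-> ->].
by exists t; rewrite mem_pairs mem_iota h1 h2 h3; case: t {h1 h2 h3} => [[]].
Qed.

Lemma box_uniq n : uniq (box n).
Proof.
apply: allpairs_uniq; rewrite ?iota_uniq //; last by move=> [? ?] [? ?].
by apply: allpairs_uniq; rewrite ?iota_uniq //; move=> [? ?] [? ?].
Qed.

Lemma count_iota_eq k e n : e < n ->
  count (fun z => k + z == e) (iota 0 n) = (k <= e).
Proof.
move=> e_lt_n; have [k_le_e | e_lt_k] := leqP k e.
  rewrite (eq_count (a2 := pred1 (e - k))) => [|z]; last by apply/eqP/eqP; lia.
  by rewrite count_uniq_mem ?iota_uniq // mem_iota; apply/eqP; lia.
by rewrite (eq_count (a2 := pred0)) ?count_pred0 // => z; apply/negbTE/eqP; lia.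
Qed.

Lemma count_iota_le k e n : e < n ->
  count (fun y => k + y <= e) (iota 0 n) = e.+1 - k.
Proof.
move=> e_lt_n; have [k_le_e | e_lt_k] := leqP k e.
  rewrite -size_filter (eq_filter (a2 := fun y => y <= 0 + (e - k))) => [|y].
    by rewrite filter_iota_leq ?size_iota; lia.
  by apply/idP/idP; lia.
rewrite (eq_count (a2 := pred0)) ?count_pred0 => [|y]; last by apply/negbTE; lia.
by apply/esym/eqP; rewrite subn_eq0.
Qed.

(* Summing the counts above over k < n; the binomial corrects for k >= n. *)
Lemma sum_iota_sub e n :
  \sum_(x <- iota 0 n) (e.+1 - x) + 'C(e.+2 - n, 2) = 'C(e.+2, 2).
Proof.
elim: n => [|n IH]; first by rewrite big_nil.
rewrite -addn1 iotaD big_cat big_seq1 /= add0n -IH.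
have [n_le | n_gt] := leqP n e.+1.
  have -> : e.+2 - n = (e.+2 - (n + 1)).+1 by lia.
  by rewrite binS bin1 addnA addnAC; congr (_ + _); lia.
by rewrite !bin_small; lia.
Qed.

Lemma count_simplex e n : e < n -> count (fun t => nsum t == e) (box n) = 'C(e.+2, 2).
Proof.
move=> e_lt_n; rewrite count_allpairs /pairs big_allpairs /=.
rewrite -(sum_iota_sub e n) [X in _ + X]bin_small ?addn0; last lia.
apply: eq_bigr => x _; rewrite -(@count_iota_le x e n e_lt_n) -sum1_count [RHS]big_mkcond.
by apply: eq_bigr => y _; rewrite /nsum /= count_iota_eq //; case: leqP.
Qed.

Definition level (g : nat) : nat := g %/ 2 + g %/ 3 + g %/ 5 + 2 - g.

Definition ztriple (t : nat * nat * nat) : itriple := ((Posz t.1.1, Posz t.1.2), Posz t.2).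

Lemma tsum_ztriple t : tsum (ztriple t) = nsum t.
Proof. by case: t => [[x y] z]; rewrite /tsum /= -!PoszD. Qed.

Lemma communal_ztriple t : communal alpha (ztriple t) =
  [&& t.1.1 * 2 <= nsum t, t.1.2 * 3 <= nsum t & t.2 * 5 <= nsum t].
Proof. by case: t => [[x y] z]; rewrite communalE /nsum /= -!PoszM -!PoszD !lez_nat. Qed.

Lemma f_box g : f g = count (fun t => [&& t.1.1 * 2 <= g, t.1.2 * 3 <= g,
                                        t.2 * 5 <= g & nsum t == g]) (box g.+1).
Proof.
rewrite /f -[X in count _ X]/[seq ztriple (xy, z) | xy <- pairs g.+1, z <- iota 0 g.+1].
rewrite -map_allpairs count_map; apply: eq_count => t.
rewrite -[LHS]/(communal alpha (ztriple t) && (tsum (ztriple t) == g)).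
rewrite communal_ztriple tsum_ztriple eqz_nat.
by case: (nsum t =P g) => [-> | _]; rewrite ?andbF ?andbT -?andbA.
Qed.

(* f(g) = 'C(L(g), 2), via the bijection t |-> (g/2, g/3, g/5) - t onto a simplex. *)
Theorem f_closed_form g : f g = 'C(level g, 2).
Proof.
rewrite f_box; have [h_ge0 | h_lt0] := leqP g (g %/ 2 + g %/ 3 + g %/ 5).
  have -> : level g = (g %/ 2 + g %/ 3 + g %/ 5 - g).+2 by rewrite /level; lia.
  rewrite -(@count_simplex _ g.+1); last lia.
  pose flip (t : nat * nat * nat) := ((g %/ 2 - t.1.1, g %/ 3 - t.1.2), g %/ 5 - t.2).
  apply: (@count_bij _ _ _ _ _ _ flip flip); rewrite ?box_uniq // => -[[x y] z].
    rewrite !mem_box /nsum /flip /= => /and3P[hx hy hz] /eqP sum_h.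
    by split; [apply/and3P; split | apply/and4P; split; try apply/eqP
              | congr (_, _, _)]; lia.
  rewrite !mem_box /nsum /flip /= => /and3P[hx hy hz] /and4P[h2 h3 h5 /eqP sum_g].
  by split; [apply/and3P; split | apply/eqP | congr (_, _, _)]; lia.
rewrite bin_small; last by rewrite /level; lia.
rewrite (eq_in_count (a2 := pred0)) ?count_pred0 // => -[[x y] z] _ /=.
by apply/and4P => -[h2 h3 h5 /eqP sum_g]; rewrite /nsum /= in sum_g; lia.
Qed.

Local Open Scope ring_scope.

(* Coefficient sequence of X^k * c. *)
Definition shiftn (k : nat) (c : nat -> int) (i : nat) : int :=
  if (i < k)%N then 0 else c (i - k)%N.

Definition poly_of_terms (ts : seq (int * nat)) : {poly int} :=
  \sum_(t <- ts) t.1 *: 'X^(t.2).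

Definition apply_terms (ts : seq (int * nat)) (c : nat -> int) (i : nat) : int :=
  \sum_(t <- ts) t.1 * shiftn t.2 c i.

Section TermOperator.

Variable ts : seq (int * nat).

Lemma coef_poly_of_terms_mul (q : {poly int}) (c : nat -> int) (i : nat) :
  (forall j, (j <= i)%N -> q`_j = c j) ->
  (poly_of_terms ts * q)`_i = apply_terms ts c i.
Proof.
move=> qc; rewrite /poly_of_terms mulr_suml coef_sum; apply: eq_bigr => t _.
rewrite -scalerAl coefZ coefXnM /shiftn; case: ifP => // _.
by rewrite qc // leq_subr.
Qed.

Lemma eq_apply_terms (c d : nat -> int) (i : nat) :
  c =1 d -> apply_terms ts c i = apply_terms ts d i.
Proof. by move=> eq_cd; apply: eq_bigr => t _; rewrite /shiftn eq_cd. Qed.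

Lemma apply_terms_add (c d : nat -> int) (i : nat) :
  apply_terms ts (fun j => c j + d j) i = apply_terms ts c i + apply_terms ts d i.
Proof.
rewrite /apply_terms -big_split; apply: eq_bigr => t _.
by rewrite /shiftn /=; case: ifP => _; rewrite ?mulr0 ?addr0 ?mulrDr.
Qed.

Lemma apply_terms_translate (c : nat -> int) (T i : nat) :
  (forall t, t \in ts -> (t.2 <= i)%N) ->
  apply_terms ts c (i + T) = apply_terms ts (fun j => c (j + T)%N) i.
Proof.
move=> deg_le; rewrite /apply_terms; apply: eq_big_seq => t /deg_le t_le.
by rewrite /shiftn !ltnNge t_le (leq_trans t_le (leq_addr _ _)) /= addnBAC.
Qed.

Lemma apply_terms_const (a : int) (i : nat) :
  (forall t, t \in ts -> (t.2 <= i)%N) ->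
  apply_terms ts (fun _ => a) i = a * (poly_of_terms ts).[1].
Proof.
move=> deg_le; rewrite /poly_of_terms horner_sum mulr_sumr /apply_terms.
apply: eq_big_seq => t /deg_le t_le.
by rewrite /shiftn ltnNge t_le hornerZ hornerXn expr1n mulr1 mulrC.
Qed.

Lemma apply_terms_propagate (c d : nat -> int) (T s : nat) :
  (0 < T)%N -> (forall t, t \in ts -> (t.2 <= s)%N) ->
  (forall j, c (j + T)%N = c j + d j) ->
  (forall i, (s <= i)%N -> apply_terms ts d i = 0) ->
  (forall i, (s <= i < s + T)%N -> apply_terms ts c i = 0) ->
  forall i, (s <= i)%N -> apply_terms ts c i = 0.
Proof.
move=> T_gt0 deg_le c_step d0 window; elim/ltn_ind => i IH s_le_i.
have [i_lt | i_ge] := ltnP i (s + T); first by rewrite window ?s_le_i.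
have -> : i = (i - T + T)%N by lia.
rewrite apply_terms_translate => [|t /deg_le]; last lia.
rewrite (@eq_apply_terms _ _ _ c_step) apply_terms_add IH ?d0 ?addr0 //; lia.
Qed.

End TermOperator.

Definition denom_terms : seq (int * nat) :=
  [:: (1, 0%N); (-1, 6%N); (-1, 10%N); (-1, 15%N);
      (1, 16%N); (1, 21%N); (1, 25%N); (-1, 31%N)].

Lemma denomE : denom = poly_of_terms denom_terms.
Proof.
rewrite /poly_of_terms !big_cons big_nil /= !scaleN1r !scale1r /denom.
by rewrite expr0; ring.
Qed.

Lemma denom_deg t : t \in denom_terms -> (t.2 <= 31)%N.
Proof. by rewrite !inE => /or4P[|||/or4P[||| /orP[]]] /eqP ->. Qed.

(* denom(1) = 0, so the operator of denom annihilates constant sequences. *)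
Lemma denom_at_1 : (poly_of_terms denom_terms).[1] = 0.
Proof. by rewrite -denomE /denom !hornerE. Qed.

Definition levelZ (g : nat) : int := level g.
Definition closedZ (g : nat) : int := 'C(level g, 2).

Lemma level_period g : level (g + 30) = (level g).+1.
Proof. by rewrite /level; lia. Qed.

Lemma closed_period g : closedZ (g + 30) = closedZ g + levelZ g.
Proof. by rewrite /closedZ /levelZ level_period binS bin1 PoszD. Qed.

(* The finite part of the verification: one period of each sequence. *)
Lemma closed_window :
  all (fun i => apply_terms denom_terms closedZ i == (i == 0%N)%:R) (iota 0 61).
Proof. by rewrite /apply_terms unlock; vm_compute. Qed.

Lemma level_window :
  all (fun i => apply_terms denom_terms levelZ i == 0) (iota 31 30).
Proof. by rewrite /apply_terms unlock; vm_compute. Qed.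

(* denom annihilates L from index 31 on: L steps by the constant 1. *)
Lemma denom_level : forall i, (31 <= i)%N -> apply_terms denom_terms levelZ i = 0.
Proof.
apply: (@apply_terms_propagate _ _ (fun _ => 1) 30 31) => //.
- exact: denom_deg.
- by move=> j; rewrite /levelZ level_period -addn1 PoszD.
- move=> i i_ge; rewrite apply_terms_const ?denom_at_1 ?mulr0 // => t /denom_deg.
  by move/leq_trans; apply.
- move=> i /andP[i_ge i_lt]; apply/eqP.
  by move/allP: level_window; apply; rewrite mem_iota i_ge.
Qed.

Lemma denom_closed_small i : (i < 61)%N ->
  apply_terms denom_terms closedZ i = (i == 0%N)%:R.
Proof. by move=> i_lt; apply/eqP; move/allP: closed_window; apply; rewrite mem_iota. Qed.

(* denom * sum_g F(g) x^g = 1: F steps by L, which denom annihilates. *)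
Lemma denom_closed i : apply_terms denom_terms closedZ i = (i == 0%N)%:R.
Proof.
have [i_lt | i_ge] := ltnP i 61; first exact: denom_closed_small.
have -> : (i == 0%N) = false by apply/eqP; lia.
apply: (@apply_terms_propagate _ closedZ levelZ 30 31) => //; last lia.
- exact: denom_deg.
- exact: closed_period.
- exact: denom_level.
- move=> j /andP[j_ge j_lt]; rewrite denom_closed_small //.
  by have -> : (j == 0%N) = false by apply/eqP; lia.
Qed.

Theorem mainTheorem9 :
  (forall g : itriple, communal alpha g ->
     exists! abc : nat * nat * nat, g = comb abc)
  /\
  (* formal power series identity  denom * (sum_g f(g) x^g) = 1,
     checked coefficientwise on all truncations *)
  (forall N i : nat, (i <= N)%N ->
     (denom * gf_trunc N)`_i = ((i == 0%N)%:R : int))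
  /\
  (forall g : nat,
     f g = 'C(g %/ 2 + g %/ 3 + g %/ 5 + 2 - g, 2)%N).
Proof.
split.
  move=> g /communal_comb[abc g_eq]; exists abc; split=> // abc' g_eq'.
  by apply: comb_inj; rewrite -g_eq -g_eq'.
split; last exact: f_closed_form.
move=> N i i_le_N; rewrite denomE -denom_closed.
apply: coef_poly_of_terms_mul => j j_le_i.
by rewrite coef_poly ltnS (leq_trans j_le_i i_le_N) f_closed_form natz.
Qed.
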